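(* Let $k$ be a field and $V$ an indecomposable representation of the quiver $\mathcal{S}$ over $k$, with endomorphism ring $\mathcal{E}=\operatorname{End}V$. Then: (1) If $V$ is of type 0 with dimension vector $(n,n,n,n)$ and $A_\gamma=F_n(p^s(t))$ ($p$ monic irreducible, $p(t)\neq t$, $s\deg p=n$), then $\mathcal{E}\simeq k[t]/(p^s(t))$. (2) If $V$ is of type I with dimension vector $(n,n,n,n)$, then $\mathcal{E}\simeq k[t]/(t^n)$. (3) If $V$ is of type II with dimension vector $(n+1,n,n+1,n)$, then $\mathcal{E}\simeq k[t]/(t^{n+1})$. (4) If $V$ is of type III, IV, III$^\ast$ or IV$^\ast$, then $\mathcal{E}\simeq k$.
   Context: $\mathcal{S}$ is the quiver with vertices $1,2,3,4$ and arrows $\alpha\colon 3\to 1$, $\beta\colon 3\to 2$, $\gamma\colon 4\to 1$, $\delta\colon 4\to 2$. A representation is $V=(V_1,\dots,V_4,f_\alpha,f_\beta,f_\gamma,f_\delta)$ with $f_\alpha\colon V_3\to V_1$, $f_\beta\colon V_3\to V_2$, $f_\gamma\colon V_4\to V_1$, $f_\delta\colon V_4\to V_2$ linear; an endomorphism is a tuple $(l_1,\dots,l_4)$, $l_i\colon V_i\to V_i$ linear, with $l_1f_\alpha=f_\alpha l_3$, $l_1f_\gamma=f_\gamma l_4$, $l_2f_\beta=f_\beta l_3$, $l_2f_\delta=f_\delta l_4$; $\operatorname{End}V$ is the ring of these under sum and composition. ''$V$ is of type X'' means $V$ is isomorphic to the representation with dimension vector $d$ and matrices $(A_\alpha,A_\beta,A_\gamma,A_\delta)$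 of $(f_\alpha,f_\beta,f_\gamma,f_\delta)$ (standard bases of $k^{d_i}$) as follows: Type 0: $d=(n,n,n,n)$, $n\ge1$, $A_\alpha=A_\beta=A_\delta=I_n$, $A_\gamma=F_n(p^s(t))$ with $p$ monic irreducible, $p(t)\ne t$. Type I: $d=(n,n,n,n)$, $n\ge1$, $A_\alpha=A_\beta=A_\delta=I_n$, $A_\gamma=J_n^+(0)$. Type II: $d=(n+1,n,n+1,n)$, $A_\alpha=I_{n+1}$, $A_\beta=I_n^{\leftarrow}$, $A_\gamma=I_n^{\downarrow}$, $A_\delta=I_n$. Type III: $d=(n+1,n,n,n)$, $A_\alpha=I_n^{\uparrow}$, $A_\beta=I_n$, $A_\gamma=I_n^{\downarrow}$, $A_\delta=I_n$. Type III$^\ast$: $d=(n,n+1,n+1,n+1)$, $A_\alpha=I_n^{\leftarrow}$, $A_\beta=I_{n+1}$, $A_\gamma=I_n^{\rightarrow}$, $A_\delta=I_{n+1}$. Type IV: $d=(n+1,n+1,n+1,n)$, $A_\alpha=A_\beta=I_{n+1}$, $A_\gamma=I_n^{\uparrow}$, $A_\delta=I_n^{\downarrow}$. Type IV$^\ast$: $d=(n,n,n,n+1)$, $A_\alpha=A_\beta=I_n$, $A_\gamma=I_n^{\leftarrow}$, $A_\delta=I_n^{\rightarrow}$. (For types II–IV$^\ast$, $n\ge 0$.) Notation: $I_n^{\uparrow}$ / $I_n^{\downarrow}$ is the $(n+1)\times n$ matrix obtained from $I_n$ by adjoining a zero row above / below; $I_n^{\rightarrow}$ / $I_n^{\leftarrow}$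 is the $n\times(n+1)$ matrix obtained from $I_n$ by adjoining a zero column on the right / left; for $n=0$ these are the formal $1\times 0$ matrix (map $0\to k$) resp. $0\times 1$ matrix (map $k\to 0$). $F_n(p^s(t))$ is the companion matrix of $p(t)^s$ ($n=s\deg p$); $J_n^+(0)$ is the $n\times n$ nilpotent Jordan block with $1$'s above the diagonal. *)

(* Representations of the quiver S: 3 -> 1, 3 -> 2, 4 -> 1, 4 -> 2
   (arrows alpha: 3->1, beta: 3->2, gamma: 4->1, delta: 4->2), over a field k,
   given by a dimension vector and the matrices of the linear maps in the
   standard bases (column-vector convention: f(x) = A *m x). *)
From HB Require Import structures.
From mathcomp Require Import all_boot all_order all_algebra.
From mathcomp Require Export qpoly.
Set Implicit Arguments. Unset Strict Implicit. Unset Printing Implicit Defensive.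
Import GRing.Theory.
Local Open Scope ring_scope.

Record rep (k : fieldType) := Rep {
  d1 : nat; d2 : nat; d3 : nat; d4 : nat;
  Aa : 'M[k]_(d1, d3);
  Ab : 'M[k]_(d2, d3);
  Ag : 'M[k]_(d1, d4);
  Ad : 'M[k]_(d2, d4) }.

Record endo (k : fieldType) (V : rep k) := Endo {
  l1 : 'M[k]_(d1 V); l2 : 'M[k]_(d2 V); l3 : 'M[k]_(d3 V); l4 : 'M[k]_(d4 V) }.

Definition is_endo (k : fieldType) (V : rep k) (e : endo V) : Prop :=
  [/\ l1 e *m Aa V = Aa V *m l3 e, l1 e *m Ag V = Ag V *m l4 e,
      l2 e *m Ab V = Ab V *m l3 e & l2 e *m Ad V = Ad V *m l4 e].

Definition endo_add (k : fieldType) (V : rep k) (e f : endo V) : endo V :=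
  Endo (l1 e + l1 f) (l2 e + l2 f) (l3 e + l3 f) (l4 e + l4 f).
Definition endo_mul (k : fieldType) (V : rep k) (e f : endo V) : endo V :=
  Endo (l1 e *m l1 f) (l2 e *m l2 f) (l3 e *m l3 f) (l4 e *m l4 f).
Definition endo_one (k : fieldType) (V : rep k) : endo V :=
  Endo 1%:M 1%:M 1%:M 1%:M.

Definition ring_iso_End (k : fieldType) (R : nzRingType) (V : rep k)
    (phi : R -> endo V) : Prop :=
  [/\ injective phi,
      forall e : endo V, is_endo e <-> exists r : R, phi r = e,
      forall a b : R, phi (a + b) = endo_add (phi a) (phi b),
      forall a b : R, phi (a * b) = endo_mul (phi a) (phi b)
    & phi 1 = endo_one V].

Definition End_iso (k : fieldType) (V : rep k) (R : nzRingType) : Prop :=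
  exists phi : R -> endo V, ring_iso_End phi.

Definition rep_iso (k : fieldType) (V W : rep k) : Prop :=
  exists (L1 : 'M[k]_(d1 W, d1 V)) (L2 : 'M[k]_(d2 W, d2 V))
         (L3 : 'M[k]_(d3 W, d3 V)) (L4 : 'M[k]_(d4 W, d4 V))
         (M1 : 'M[k]_(d1 V, d1 W)) (M2 : 'M[k]_(d2 V, d2 W))
         (M3 : 'M[k]_(d3 V, d3 W)) (M4 : 'M[k]_(d4 V, d4 W)),
    [/\ L1 *m M1 = 1%:M /\ M1 *m L1 = 1%:M, L2 *m M2 = 1%:M /\ M2 *m L2 = 1%:M,
        L3 *m M3 = 1%:M /\ M3 *m L3 = 1%:M, L4 *m M4 = 1%:M /\ M4 *m L4 = 1%:M
      & [/\ L1 *m Aa V = Aa W *m L3, L2 *m Ab V = Ab W *m L3,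
            L1 *m Ag V = Ag W *m L4 & L2 *m Ad V = Ad W *m L4]].

(* Indecomposability: V <> 0, and whenever V = U (+) W with U, W
   subrepresentations, U = 0 or W = 0.  A subspace of k^d is encoded as the
   row space of a d x d matrix; a row vector v is sent by f (matrix A) to
   v *m A^T. *)
Definition invariant (k : fieldType) (V : rep k) (U1 : 'M[k]_(d1 V))
    (U2 : 'M[k]_(d2 V)) (U3 : 'M[k]_(d3 V)) (U4 : 'M[k]_(d4 V)) : bool :=
  [&& (U3 *m (Aa V)^T <= U1)%MS, (U3 *m (Ab V)^T <= U2)%MS,
      (U4 *m (Ag V)^T <= U1)%MS & (U4 *m (Ad V)^T <= U2)%MS].

Definition compl_sub (k : fieldType) (d : nat) (U W : 'M[k]_d) : bool :=
  (U :&: W <= (0 : 'M[k]_d))%MS && (1%:M <= U + W)%MS.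

Definition indecomposable (k : fieldType) (V : rep k) : Prop :=
  (0 < d1 V + d2 V + d3 V + d4 V)%N /\
  forall U1 U2 U3 U4 W1 W2 W3 W4,
    @invariant k V U1 U2 U3 U4 -> @invariant k V W1 W2 W3 W4 ->
    compl_sub U1 W1 -> compl_sub U2 W2 -> compl_sub U3 W3 -> compl_sub U4 W4 ->
    (U1 == 0) && (U2 == 0) && (U3 == 0) && (U4 == 0) \/
    (W1 == 0) && (W2 == 0) && (W3 == 0) && (W4 == 0).

Definition I_up (k : fieldType) n : 'M[k]_(n.+1, n) :=
  \matrix_(i, j) ((i : nat) == j.+1)%:R.
Definition I_down (k : fieldType) n : 'M[k]_(n.+1, n) :=
  \matrix_(i, j) ((i : nat) == j)%:R.
Definition I_right (k : fieldType) n : 'M[k]_(n, n.+1) :=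
  \matrix_(i, j) ((i : nat) == j)%:R.
Definition I_left (k : fieldType) n : 'M[k]_(n, n.+1) :=
  \matrix_(i, j) ((j : nat) == i.+1)%:R.
Definition Jnil (k : fieldType) n : 'M[k]_n :=
  \matrix_(i, j) ((j : nat) == i.+1)%:R.

Definition type0 (k : fieldType) (q : {poly k}) : rep k :=
  let n := (size q).-1 in
  @Rep k n n n n 1%:M 1%:M (companionmx q) 1%:M.
Definition typeI (k : fieldType) n : rep k :=
  @Rep k n n n n 1%:M 1%:M (Jnil k n) 1%:M.
Definition typeII (k : fieldType) n : rep k :=
  @Rep k n.+1 n n.+1 n 1%:M (I_left k n) (I_down k n) 1%:M.
Definition typeIII (k : fieldType) n : rep k :=
  @Rep k n.+1 n n n (I_up k n) 1%:M (I_down k n) 1%:M.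
Definition typeIIIs (k : fieldType) n : rep k :=
  @Rep k n n.+1 n.+1 n.+1 (I_left k n) 1%:M (I_right k n) 1%:M.
Definition typeIV (k : fieldType) n : rep k :=
  @Rep k n.+1 n.+1 n.+1 n 1%:M 1%:M (I_up k n) (I_down k n).
Definition typeIVs (k : fieldType) n : rep k :=
  @Rep k n n n n.+1 1%:M 1%:M (I_left k n) (I_right k n).

From HB Require Import structures.
From mathcomp Require Import all_boot all_order all_algebra qpoly zify.
Import GRing.Theory.
Local Open Scope ring_scope.

(* An isomorphism of representations conjugates endomorphisms componentwise, so
   it suffices to compute End of the standard representations.  For types 0 and I
   all four components of an endomorphism coincide and commute with the companion
   matrix A of q = p^s, resp. t^n; for type II the components on V_2 = V_4 are
   determined by those on V_1 = V_3, which commute with J_{n+1} = I_down I_left.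
   The first basis row vector is cyclic for A, so a matrix commuting with A is
   determined by its first row, hence is a polynomial in A: the commutant of A is
   k[A], isomorphic to k[t]/(q) by Cayley-Hamilton.  For types III, IV and their
   duals, intertwining the two embeddings k^n -> k^(n+1) by a zero row (or
   column) above and below makes an endomorphism a Toeplitz matrix vanishing on
   the first row and the last row off the diagonal, i.e. a scalar. *)

Lemma conjmxK {k : fieldType} {m n p q} {L : 'M[k]_(m, n)} {Li : 'M[k]_(n, m)}
    {K : 'M[k]_(p, q)} {Ki : 'M[k]_(q, p)} (a : 'M[k]_(m, p)) :
  L *m Li = 1%:M -> K *m Ki = 1%:M -> L *m (Li *m a *m K) *m Ki = a.
Proof.
by move=> L_Li K_Ki; rewrite !mulmxA L_Li mul1mx -mulmxA K_Ki mulmx1.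
Qed.

Lemma conjmxM {k : fieldType} {m n} (L : 'M[k]_(m, n)) (Li : 'M[k]_(n, m))
    (a b : 'M[k]_m) :
  L *m Li = 1%:M -> (Li *m a *m L) *m (Li *m b *m L) = Li *m (a *m b) *m L.
Proof. by move=> L_Li; rewrite !mulmxA -[Li *m a *m L *m Li]mulmxA L_Li mulmx1. Qed.

Lemma conjmx_intertwine {k : fieldType} {a b a' b' : nat}
    {A : 'M[k]_(a, b)} {A' : 'M[k]_(a', b')} {L : 'M[k]_(a', a)} {Li : 'M[k]_(a, a')}
    {K : 'M[k]_(b', b)} {Ki : 'M[k]_(b, b')} :
  Li *m L = 1%:M -> L *m Li = 1%:M -> K *m Ki = 1%:M -> L *m A = A' *m K ->
  forall (x : 'M[k]_a') (y : 'M[k]_b'),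
  (Li *m x *m L) *m A = A *m (Ki *m y *m K) <-> x *m A' = A' *m y.
Proof.
move=> Li_L L_Li K_Ki LA x y.
have A_Ki : A *m Ki = Li *m A'.
  by rewrite -[A]mul1mx -Li_L -(mulmxA Li L A) LA !mulmxA -(mulmxA _ K Ki) K_Ki mulmx1.
rewrite -(mulmxA (Li *m x)) LA !mulmxA A_Ki -[Li *m x *m A']mulmxA -[Li *m A' *m y]mulmxA.
split=> [E|-> //].
by rewrite -[LHS](conjmxK _ L_Li K_Ki) E conjmxK.
Qed.

Lemma End_iso_transport (k : fieldType) (V W : rep k) (R : nzRingType) :
  rep_iso V W -> End_iso W R -> End_iso V R.
Proof.
case=> L1 [L2 [L3 [L4 [M1 [M2 [M3 [M4 [[h1 h1'] [h2 h2'] [h3 h3'] [h4 h4'] [e1 e2 e3 e4]]]]]]]]].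
case=> phi [phi_inj phi_endo phiD phiM phi1].
pose T (e : endo W) : endo V := Endo (M1 *m l1 e *m L1) (M2 *m l2 e *m L2)
  (M3 *m l3 e *m L3) (M4 *m l4 e *m L4).
pose U (f : endo V) : endo W := Endo (L1 *m l1 f *m M1) (L2 *m l2 f *m M2)
  (L3 *m l3 f *m M3) (L4 *m l4 f *m M4).
have TK : cancel T U by case=> a b c d; rewrite /T /U /= !conjmxK.
have UK : cancel U T by case=> a b c d; rewrite /T /U /= !conjmxK.
have T_endo e : is_endo (T e) <-> is_endo e.
  have ca := conjmx_intertwine h1' h1 h3 e1 (l1 e) (l3 e).
  have cg := conjmx_intertwine h1' h1 h4 e3 (l1 e) (l4 e).
  have cb := conjmx_intertwine h2' h2 h3 e2 (l2 e) (l3 e).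
  have cd := conjmx_intertwine h2' h2 h4 e4 (l2 e) (l4 e).
  by split=> -[/ca-a /cg-g /cb-b /cd-d].
exists (T \o phi); split.
- exact: inj_comp (can_inj TK) phi_inj.
- move=> e; split=> [|[r <-]]; last by apply/T_endo/phi_endo; exists r.
  rewrite -[e]UK => /T_endo/phi_endo[r Er].
  by exists r; rewrite /= Er.
- by move=> a b; rewrite /= phiD /T /endo_add /= !mulmxDr !mulmxDl.
- by move=> a b; rewrite /= phiM /T /endo_mul /= !conjmxM.
- by rewrite /= phi1 /T /= !mulmx1 h1' h2' h3' h4'.
Qed.

Lemma sum_delta_nat {R : pzSemiRingType} {m} (F : 'I_m -> R) (i0 : 'I_m) (t : nat) :
  val i0 = t -> \sum_(l < m) (l == t :> nat)%:R * F l = F i0.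
Proof.
move=> <-; rewrite (bigD1 i0) //= eqxx mul1r big1 ?addr0 // => l /negPf l_i0.
by rewrite val_eqE l_i0 mul0r.
Qed.

Lemma sum_delta_nat_out {R : pzSemiRingType} {m} (F : 'I_m -> R) (t : nat) :
  (m <= t)%N -> \sum_(l < m) (l == t :> nat)%:R * F l = 0.
Proof.
move=> le_mt; apply: big1 => l _.
by rewrite ltn_eqF ?mul0r // (leq_trans (ltn_ord l)).
Qed.

Definition centralizer_iso {k : fieldType} {R : nzRingType} {m} (M : 'M[k]_m)
    (phi : R -> 'M[k]_m) : Prop :=
  [/\ injective phi, forall X, X *m M = M *m X <-> exists r, phi r = X,
      {morph phi : a b / a + b}, {morph phi : a b / a * b >-> a *m b}
    & phi 1 = 1%:M].

Section CyclicCentralizer.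
Context {k : fieldType} {d : nat} {M : 'M[k]_d.+1} {q : {poly k}}.
Hypotheses (q_monic : q \is monic) (size_q : size q = d.+2)
  (root_q : horner_mx M q = 0)
  (row0_exp : forall i : 'I_d.+1, row 0 (M ^+ i) = delta_mx 0 i).

Lemma mk_monic_id : mk_monic q = q.
Proof. by rewrite /mk_monic size_q q_monic. Qed.

Lemma size_qpoly (a : {poly %/ q}) : (size (a : {poly k}) <= d.+1)%N.
Proof. by rewrite -ltnS (leq_trans (size_mk_monic a)) // mk_monic_id size_q. Qed.

Lemma horner_mx_rmodp (r : {poly k}) :
  horner_mx M (Pdiv.Ring.rmodp r (mk_monic q)) = horner_mx M r.
Proof.
by rewrite mk_monic_id [in RHS](Pdiv.RingMonic.rdivp_eq q_monic r) rmorphD rmorphM /= root_q mulr0 add0r.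
Qed.

Lemma row0_horner_mx (r : {poly k}) :
  (size r <= d.+1)%N -> row 0 (horner_mx M r) = \row_j r`_j.
Proof.
move=> size_r; rewrite [RHS]row_sum_delta.
rewrite -[r in LHS](take_poly_id size_r) /take_poly poly_def linear_sum.
rewrite (linear_sum (row 0)); apply: eq_bigr => i _.
by rewrite linearZ /= rmorphXn /= horner_mx_X rowE -scalemxAr -rowE row0_exp mxE.
Qed.

Lemma row_commute_exp X : X *m M = M *m X ->
  forall i : 'I_d.+1, row i X = row 0 X *m M ^+ i.
Proof.
move=> XM i.
have XMi : M ^+ i *m X = X *m M ^+ i by rewrite !mulmxE; apply/esym/commrX.
by rewrite rowE -row0_exp -row_mul XMi row_mul.
Qed.

Lemma horner_qpoly_centralizer_iso :
  centralizer_iso M (fun a : {poly %/ q} => horner_mx M a).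
Proof.
split.
- move=> a b /(congr1 (row 0)); rewrite !row0_horner_mx ?size_qpoly // => /rowP eq_ab.
  apply: val_inj; apply/polyP => j; case: (ltnP j d.+1) => [lt_jd | le_dj].
    by have := eq_ab (Ordinal lt_jd); rewrite !mxE.
  by rewrite !nth_default // (leq_trans (size_qpoly _) le_dj).
- move=> X; split=> [XM | [a <-]]; last exact: comm_horner_mx.
  pose r := \poly_(j < d.+1) X 0 (inord j).
  have size_r : (size r < size (mk_monic q))%N by rewrite mk_monic_id size_q ltnS size_poly.
  exists (in_qpoly q r); rewrite [X in horner_mx M X]in_qpoly_small //.
  have rM : horner_mx M r *m M = M *m horner_mx M r by apply: comm_horner_mx.
  apply/row_matrixP => i; rewrite (row_commute_exp _ rM) (row_commute_exp _ XM).
  congr (_ *m _); rewrite row0_horner_mx ?size_poly //; apply/rowP => j.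
  by rewrite !mxE coef_poly ltn_ord inord_val.
- by move=> a b /=; rewrite rmorphD.
- by move=> a b; rewrite poly_of_qpolyM horner_mx_rmodp rmorphM.
- exact: horner_mx_C.
Qed.

End CyclicCentralizer.

(* The entries of [companionmx q], for matrices whose size is not syntactically
   [(size q).-1]. *)
Definition is_companionmx {k : fieldType} (q : {poly k}) {m} (M : 'M[k]_m) : Prop :=
  forall i j, M i j = if i == m.-1 :> nat then - q`_j else (i.+1 == j :> nat)%:R.

Lemma char_poly_castmx {k : fieldType} {m m'} (e : m = m') (A : 'M[k]_m) :
  char_poly (castmx (e, e) A) = char_poly A.
Proof. by case: m' / e; rewrite castmx_id. Qed.

Section Companion.
Context {k : fieldType} {d : nat} {q : {poly k}} {M : 'M[k]_d.+1}.
Hypothesis M_companion : is_companionmx q M.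

Lemma companion_row0_exp (i : 'I_d.+1) : row 0 (M ^+ i) = delta_mx 0 i.
Proof.
case: i => i; elim: i => [|i IH] lt_i.
  by rewrite expr0 row1; congr delta_mx; apply: val_inj.
rewrite exprSr -mulmxE row_mul (IH (ltnW lt_i)) -rowE; apply/rowP => j.
rewrite !mxE M_companion /= -val_eqE /= ifN 1?eq_sym //.
by rewrite neq_ltn (lt_i : i < d)%N ?orbT.
Qed.

Lemma companion_root : size q = d.+2 -> q \is monic -> horner_mx M q = 0.
Proof.
move=> size_q q_monic; have e : (size q).-1 = d.+1 by rewrite size_q.
have -> : M = castmx (e, e) (companionmx q).
  by apply/matrixP => i j; rewrite castmxE !mxE M_companion /= size_q.
by rewrite -[q in horner_mx _ q](companionmxK q_monic) -(char_poly_castmx e) Cayley_Hamilton.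
Qed.

Lemma companion_centralizer_iso : q \is monic -> size q = d.+2 ->
  centralizer_iso M (fun a : {poly %/ q} => horner_mx M a).
Proof.
move=> q_monic size_q.
exact: horner_qpoly_centralizer_iso q_monic size_q (companion_root size_q q_monic)
  companion_row0_exp.
Qed.

End Companion.

Lemma End_iso_gamma {k : fieldType} {R : nzRingType} {m} (M : 'M[k]_m)
    (phi : R -> 'M[k]_m) :
  centralizer_iso M phi -> End_iso (@Rep k m m m m 1%:M 1%:M M 1%:M) R.
Proof.
case=> phi_inj phi_im phiD phiM phi1.
exists (fun r => @Endo k (@Rep k m m m m 1%:M 1%:M M 1%:M) (phi r) (phi r) (phi r) (phi r)).
split.
- by move=> a b [/phi_inj].
- case=> a b c e; rewrite /is_endo /= !mulmx1 !mul1mx; split.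
    by case=> <- aM -> ae; rewrite -ae in aM *; case/phi_im: aM => r <-; exists r.
  by case=> r [<- <- <- <-]; split=> //; apply/phi_im; exists r.
- by move=> a b; rewrite phiD.
- by move=> a b; rewrite phiM.
- by rewrite phi1.
Qed.

Lemma End_iso_companion_rep {k : fieldType} {m} (M : 'M[k]_m) (q : {poly k}) :
  q \is monic -> size q = m.+1 -> (0 < m)%N -> is_companionmx q M ->
  End_iso (@Rep k m m m m 1%:M 1%:M M 1%:M) {poly %/ q}.
Proof.
case: m M => // d M q_monic size_q _ M_companion.
exact: End_iso_gamma (companion_centralizer_iso M_companion q_monic size_q).
Qed.

Lemma End_iso_type0 (k : fieldType) (q : {poly k}) :
  q \is monic -> (1 < size q)%N -> End_iso (type0 q) {poly %/ q}.
Proof.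
move=> q_monic size_q; apply: End_iso_companion_rep => //; last by move=> i j; rewrite mxE.
  by rewrite prednK // ltnW.
by rewrite -ltn_predRL in size_q.
Qed.

Lemma Jnil_companion (k : fieldType) n : is_companionmx ('X^n : {poly k}) (Jnil k n).
Proof.
move=> i j; rewrite mxE coefXn eq_sym (ltn_eqF (ltn_ord j)) oppr0.
case: ifP => // /eqP ->; case: n i j => [[] // | n] i j /=.
by rewrite (gtn_eqF (ltn_ord j)).
Qed.

Lemma End_iso_typeI (k : fieldType) n :
  (0 < n)%N -> End_iso (typeI k n) {poly %/ ('X^n : {poly k})}.
Proof.
move=> n_gt0; apply: End_iso_companion_rep n_gt0 (Jnil_companion k n).
  exact: monicXn.
exact: size_polyXn.
Qed.

Section TypeII.
Context {k : fieldType} {n : nat}.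
Local Notation D := (I_down k n).
Local Notation L := (I_left k n).
Local Notation N := (Jnil k n.+1).

Lemma tr_I_down_mul : D^T *m D = 1%:M.
Proof.
apply/matrixP => i j; rewrite !mxE; under eq_bigr do rewrite !mxE.
by rewrite (sum_delta_nat _ (widen_ord (leqnSn n) i)).
Qed.

Lemma I_left_mul_tr : L *m L^T = 1%:M.
Proof.
apply/matrixP => i j; rewrite !mxE; under eq_bigr do rewrite !mxE.
by rewrite (sum_delta_nat _ (lift ord0 i)).
Qed.

Lemma I_down_mul_I_left : D *m L = N.
Proof.
apply/matrixP => i j; rewrite !mxE; under eq_bigr do rewrite !mxE eq_sym.
case: (ltnP i n) => [lt_in | le_ni]; first by rewrite (sum_delta_nat _ (Ordinal lt_in)).
by rewrite sum_delta_nat_out // ltn_eqF // (leq_trans (ltn_ord j)).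
Qed.

Lemma typeII_intertwineP (X : 'M[k]_n.+1) (Y : 'M[k]_n) :
  X *m D = D *m Y /\ Y *m L = L *m X <-> X *m N = N *m X /\ Y = D^T *m X *m D.
Proof.
rewrite -I_down_mul_I_left; split=> [[XD YL] | [XN ->]].
  split; first by rewrite mulmxA XD -!mulmxA YL.
  by rewrite -mulmxA XD mulmxA tr_I_down_mul mul1mx.
split; last by rewrite -!mulmxA XN !mulmxA tr_I_down_mul mul1mx.
have XD : X *m D = D *m (L *m X *m L^T).
  by rewrite -[X *m D]mulmx1 -I_left_mul_tr mulmxA -(mulmxA X) XN -!mulmxA.
by rewrite -mulmxA XD (mulmxA D^T) tr_I_down_mul mul1mx.
Qed.

Lemma End_iso_typeII (R : nzRingType) (phi : R -> 'M[k]_n.+1) :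
  centralizer_iso N phi -> End_iso (typeII k n) R.
Proof.
case=> phi_inj phi_im phiD phiM phi1.
pose psi r := D^T *m phi r *m D.
have phi_psi r : phi r *m D = D *m psi r /\ psi r *m L = L *m phi r.
  by apply/typeII_intertwineP; split=> //; apply/phi_im; exists r.
exists (fun r => @Endo k (typeII k n) (phi r) (psi r) (phi r) (psi r)); split.
- by move=> a b [/phi_inj].
- case=> a b c e; rewrite /is_endo /= !mulmx1 !mul1mx; split.
    case=> <- aD bL be; subst e.
    have [/phi_im[r ra] ->] := iffLR (typeII_intertwineP a b) (conj aD bL).
    by exists r; rewrite /psi ra.
  by case=> r [<- <- <- <-]; have [] := phi_psi r.
- by move=> a b; rewrite /psi phiD mulmxDr mulmxDl.
- move=> a b; rewrite /psi phiM /endo_mul /=.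
  by rewrite -[in RHS]mulmxA -(proj1 (phi_psi b)) !mulmxA.
- by rewrite /psi phi1 mulmx1 tr_I_down_mul.
Qed.

End TypeII.

Lemma toeplitz_scalar {R : pzSemiRingType} {n} (X : 'M[R]_n.+1) :
  (forall i j : 'I_n,
     X (lift ord0 i) (lift ord0 j) = X (widen_ord (leqnSn n) i) (widen_ord (leqnSn n) j)) ->
  (forall j : 'I_n, X ord0 (lift ord0 j) = 0) ->
  (forall j : 'I_n, X ord_max (widen_ord (leqnSn n) j) = 0) ->
  X = (X 0 0)%:M.
Proof.
move=> X_shift X_top X_bottom.
pose x a b := X (inord a) (inord b).
have inord_lift a (lt_an : (a < n)%N) : inord a.+1 = lift ord0 (Ordinal lt_an).
  by apply: val_inj; rewrite /= inordK.
have inord_widen a (lt_an : (a < n)%N) : inord a = widen_ord (leqnSn n) (Ordinal lt_an).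
  by apply: val_inj; rewrite /= inordK // ltnW.
have inord0 : inord 0 = ord0 :> 'I_n.+1 by apply: val_inj; rewrite /= inordK.
have x_diag t a b : (a + t <= n)%N -> (b + t <= n)%N -> x (a + t)%N (b + t)%N = x a b.
  elim: t => [|t IH]; rewrite ?addn0 // !addnS => lt_a lt_b.
  rewrite -IH 1?ltnW // /x (inord_lift _ lt_a) (inord_lift _ lt_b) X_shift.
  by rewrite -!inord_widen.
have x_top b : (0 < b <= n)%N -> x 0%N b = 0.
  case: b => // b /= lt_b; rewrite /x inord0 (inord_lift _ lt_b); exact: X_top.
have x_bottom b : (b < n)%N -> x n b = 0.
  move=> lt_b; rewrite /x (inord_widen _ lt_b).
  by rewrite (_ : inord n = ord_max) ?X_bottom //; apply: val_inj; rewrite /= inordK.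
have x_scalar a b : (a <= n)%N -> (b <= n)%N -> x a b = x 0%N 0%N *+ (a == b).
  move=> le_an le_bn; case: (ltngtP a b) => [lt_ab | lt_ba | <-].
  - rewrite mulr0n -[a]add0n -(subnK (ltnW lt_ab)) x_diag ?x_top //; lia.
  - rewrite mulr0n -(x_diag (n - a)%N) ?subnKC ?x_bottom //; lia.
  - by rewrite -[a]add0n x_diag ?add0n.
apply/matrixP => i j; rewrite mxE.
by have := x_scalar i j (ltn_ord i) (ltn_ord j); rewrite /x !inord_val inord0.
Qed.

Section EmbeddingProducts.
Context {k : fieldType} {n : nat}.
Local Notation U := (I_up k n).
Local Notation D := (I_down k n).
Local Notation widen := (widen_ord (leqnSn n)).

Lemma mulmx_I_upE m (A : 'M[k]_(m, n.+1)) i j : (A *m U) i j = A i (lift ord0 j).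
Proof.
rewrite !mxE; under eq_bigr do rewrite mxE mulrC.
exact: sum_delta_nat.
Qed.

Lemma I_up_mulmx_lift p (B : 'M[k]_(n, p)) i j : (U *m B) (lift ord0 i) j = B i j.
Proof.
rewrite !mxE; under eq_bigr do rewrite mxE /= eqSS eq_sym.
exact: sum_delta_nat.
Qed.

Lemma I_up_mulmx0 p (B : 'M[k]_(n, p)) j : (U *m B) ord0 j = 0.
Proof. by rewrite !mxE big1 // => l _; rewrite mxE mul0r. Qed.

Lemma mulmx_I_downE m (A : 'M[k]_(m, n.+1)) i j : (A *m D) i j = A i (widen j).
Proof.
rewrite !mxE; under eq_bigr do rewrite mxE mulrC.
exact: sum_delta_nat.
Qed.

Lemma I_down_mulmx_widen p (B : 'M[k]_(n, p)) i j : (D *m B) (widen i) j = B i j.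
Proof.
rewrite !mxE; under eq_bigr do rewrite mxE /= eq_sym.
exact: sum_delta_nat.
Qed.

Lemma I_down_mulmx_max p (B : 'M[k]_(n, p)) j : (D *m B) ord_max j = 0.
Proof.
rewrite !mxE; under eq_bigr do rewrite mxE /= eq_sym.
exact: sum_delta_nat_out.
Qed.

Lemma intertwine_I_up_I_down (X : 'M[k]_n.+1) (Y : 'M[k]_n) :
  X *m U = U *m Y -> X *m D = D *m Y -> X = (X 0 0)%:M /\ Y = (X 0 0)%:M.
Proof.
move=> XU XD.
have X_lift i j : X (lift ord0 i) (lift ord0 j) = Y i j.
  by rewrite -mulmx_I_upE XU I_up_mulmx_lift.
have X_widen i j : X (widen i) (widen j) = Y i j.
  by rewrite -mulmx_I_downE XD I_down_mulmx_widen.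
have X_scalar : X = (X 0 0)%:M.
  apply: toeplitz_scalar => [i j | j | j]; first by rewrite X_lift X_widen.
    by rewrite -mulmx_I_upE XU I_up_mulmx0.
  by rewrite -mulmx_I_downE XD I_down_mulmx_max.
by split=> //; apply/matrixP => i j; rewrite -X_widen {1}X_scalar !mxE.
Qed.

End EmbeddingProducts.

Lemma intertwine_I_left_I_right (k : fieldType) n (X : 'M[k]_n) (Y : 'M[k]_n.+1) :
  X *m I_left k n = I_left k n *m Y -> X *m I_right k n = I_right k n *m Y ->
  X = (Y 0 0)%:M /\ Y = (Y 0 0)%:M.
Proof.
have trL : (I_left k n)^T = I_up k n by apply/matrixP => i j; rewrite !mxE.
have trR : (I_right k n)^T = I_down k n by apply/matrixP => i j; rewrite !mxE eq_sym.
move=> /(congr1 trmx) XL /(congr1 trmx) XR; rewrite !trmx_mul trL trR in XL XR.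
have [YT XT] := intertwine_I_up_I_down _ _ (esym XL) (esym XR).
by rewrite -[X]trmxK -[Y]trmxK XT YT !mxE !tr_scalar_mx.
Qed.

Lemma End_iso_scalar (k : fieldType) (V : rep k) :
  [|| 0 < d1 V, 0 < d2 V, 0 < d3 V | 0 < d4 V]%N ->
  (forall e : endo V, is_endo e -> exists c : k, e = Endo c%:M c%:M c%:M c%:M) ->
  End_iso V k.
Proof.
move=> V_nonzero endo_scalar.
have scalar_inj m : (0 < m)%N -> injective (fun c : k => c%:M : 'M[k]_m).
  by case: m => // m _ a b /matrixP/(_ 0 0); rewrite !mxE.
exists (fun c : k => Endo c%:M c%:M c%:M c%:M); split.
- by move=> a b [? ? ? ?]; case/or4P: V_nonzero => /scalar_inj; apply.
- move=> e; split; first by move/endo_scalar => [c ->]; exists c.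
  by move=> [c <-]; split; rewrite scalar_mxC.
- by move=> a b; rewrite /endo_add /= !raddfD.
- by move=> a b; rewrite /endo_mul /= !scalar_mxM.
- by [].
Qed.

Lemma End_iso_typeIII (k : fieldType) n : End_iso (typeIII k n) k.
Proof.
apply: End_iso_scalar => // -[a b c e]; rewrite /is_endo /= !mulmx1 !mul1mx.
case=> aU aD bc be; subst c e.
have [aE bE] := intertwine_I_up_I_down _ _ aU aD.
by exists (a 0 0); congr Endo.
Qed.

Lemma End_iso_typeIV (k : fieldType) n : End_iso (typeIV k n) k.
Proof.
apply: End_iso_scalar => // -[a b c e]; rewrite /is_endo /= !mulmx1 !mul1mx.
case=> ac aU bc bD; subst c b.
have [aE eE] := intertwine_I_up_I_down _ _ aU bD.
by exists (a 0 0); congr Endo.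
Qed.

Lemma End_iso_typeIIIs (k : fieldType) n : End_iso (typeIIIs k n) k.
Proof.
apply: End_iso_scalar => [|[a b c e]]; first by rewrite orbT.
rewrite /is_endo /= !mulmx1 !mul1mx => -[aL aR bc be]; subst c e.
have [aE bE] := intertwine_I_left_I_right _ _ _ _ aL aR.
by exists (b 0 0); congr Endo.
Qed.

Lemma End_iso_typeIVs (k : fieldType) n : End_iso (typeIVs k n) k.
Proof.
apply: End_iso_scalar => [|[a b c e]]; first by rewrite !orbT.
rewrite /is_endo /= !mulmx1 !mul1mx => -[ac aL bc bR]; subst c b.
have [aE eE] := intertwine_I_left_I_right _ _ _ _ aL bR.
by exists (e 0 0); congr Endo.
Qed.

Theorem theorem3p1 (k : fieldType) (V : rep k) :
  indecomposable V ->
  (* (1) type 0 *)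
  (forall (p : {poly k}) (s : nat),
      p \is monic -> irreducible_poly p -> p != 'X -> (0 < s)%N ->
      rep_iso V (type0 (p ^+ s)) -> End_iso V {poly %/ p ^+ s}) /\
  (* (2) type I *)
  (forall n : nat, (0 < n)%N ->
      rep_iso V (typeI k n) -> End_iso V {poly %/ ('X ^+ n : {poly k})}) /\
  (* (3) type II *)
  (forall n : nat,
      rep_iso V (typeII k n) -> End_iso V {poly %/ ('X ^+ n.+1 : {poly k})}) /\
  (* (4) types III, IV, III*, IV* *)
  (forall n : nat,
      rep_iso V (typeIII k n) \/ rep_iso V (typeIV k n) \/
      rep_iso V (typeIIIs k n) \/ rep_iso V (typeIVs k n) ->
      End_iso V k).
Proof.
move=> _; split; [|split; [|split]].
- move=> p s p_monic [p_gt1 _] _ s_gt0 /End_iso_transport; apply.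
  apply: End_iso_type0; first exact: monic_exp.
  by rewrite -ltn_predRL size_exp muln_gt0 s_gt0 andbT ltn_predRL.
- by move=> n n_gt0 /End_iso_transport; apply; apply: End_iso_typeI.
- move=> n /End_iso_transport; apply; apply: End_iso_typeII.
  exact: companion_centralizer_iso (Jnil_companion k n.+1) (monicXn _ _) (size_polyXn _ _).
- move=> n [|[|[]]] /End_iso_transport; apply.
  + exact: End_iso_typeIII.
  + exact: End_iso_typeIV.
  + exact: End_iso_typeIIIs.
  + exact: End_iso_typeIVs.
Qed.
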